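(* Let $X,Y$ be Polish spaces, $f\colon X\to Y$ a continuous map, and let $A\subseteq X$ be the set of points of $X$ which are not locally dense for $f$. Then $f(A)$ is meager in $Y$.
   Context: For a continuous map $f\colon X\to Y$ between Polish spaces, a point $x\in X$ is locally dense for $f$ if for every neighborhood $U$ of $x$ the set $\overline{f(U)}$ is a neighborhood of $f(x)$. *)

From HB Require Import structures.
From mathcomp Require Import all_boot all_order all_algebra.
From mathcomp Require Import all_classical all_reals all_analysis.
From mathcomp Require Import Rstruct Rstruct_topology.
Set Implicit Arguments. Unset Strict Implicit. Unset Printing Implicit Defensive.
Import Order.TTheory GRing.Theory Num.Theory.
Local Open Scope classical_set_scope.
Local Open Scope ring_scope.

Definition compatible_metric (T : topologicalType) (d : T -> T -> Rdefinitions.R) :=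
  [/\ (forall x y, 0 <= d x y),
      (forall x y, d x y = 0 <-> x = y),
      (forall x y, d x y = d y x),
      (forall x y z, d x z <= d x y + d y z) &
      (forall A : set T, open A <->
         (forall x, A x -> exists2 e : Rdefinitions.R, 0 < e &
                              [set y | d x y < e] `<=` A))].

Definition completely_metrizable (T : topologicalType) :=
  exists d : T -> T -> Rdefinitions.R, compatible_metric d /\
    (forall u : nat -> T,
       (forall e : Rdefinitions.R, 0 < e ->
          exists N : nat, forall m n : nat, (N <= m)%N -> (N <= n)%N ->
            d (u m) (u n) < e) ->
       exists l : T, u @ \oo --> l).

Definition separable_space (T : topologicalType) :=
  exists D : set T, countable D /\ dense D.

Definition polish (T : topologicalType) :=
  separable_space T /\ completely_metrizable T.

Definition nowhere_dense (T : topologicalType) (A : set T) :=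
  (closure A)° = set0.

Definition meager (T : topologicalType) (B : set T) :=
  exists F : nat -> set T, (forall n, nowhere_dense (F n)) /\
    B `<=` \bigcup_n F n.

Definition locally_dense (X Y : topologicalType) (f : X -> Y) (x : X) :=
  forall U : set X, nbhs x U -> nbhs (f x) (closure (f @` U)).

From mathcomp Require Import all_boot all_order all_algebra.
From mathcomp Require Import all_classical all_reals all_analysis.
From mathcomp Require Import Rstruct Rstruct_topology lra.
Set Implicit Arguments. Unset Strict Implicit. Unset Printing Implicit Defensive.
Import Order.TTheory GRing.Theory Num.Theory.
Local Open Scope classical_set_scope.
Local Open Scope ring_scope.

(* If x is not locally dense, some neighbourhood U of x has cl f(U) not a
   neighbourhood of f x; shrinking U to a basic open set V around x keeps this,
   while f x stays in cl f(V). Hence f x lies in the frontier of the closed set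
   cl f(V), which is nowhere dense. A separable metrizable space has a
   countable basis, so countably many such frontiers cover f(A). *)

Section NowhereDense.
Variable T : topologicalType.
Implicit Types A B C : set T.

Lemma nowhere_denseS A B : A `<=` B -> nowhere_dense B -> nowhere_dense A.
Proof.
move=> AB; rewrite /nowhere_dense -!subset0; apply: subset_trans.
exact/interiorS/closureS.
Qed.

Lemma nowhere_dense0 : nowhere_dense (@set0 T).
Proof. by rewrite /nowhere_dense closure0 interior0. Qed.

Lemma nowhere_dense_setD_interior C : closed C -> nowhere_dense (C `\` C°).
Proof.
move=> cC; rewrite /nowhere_dense -subset0 => x Ex.
have EC : closure (C `\` C°) `<=` C.
  by move=> y /(closureS (@subDsetl _ _ _)) /cC.
have ECi : closure (C `\` C°) `<=` ~` C°.
  move=> y Ey; apply: (open_closedC (open_interior C)).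
  by apply: closureS Ey => z [].
exact: ECi _ (interior_subset Ex) (interiorS EC Ex).
Qed.

Lemma meagerS A B : A `<=` B -> meager B -> meager A.
Proof. by move=> AB [F [ndF BF]]; exists F; split => // x /AB /BF. Qed.

Lemma meager_bigcup (I : Type) (D : set I) (F : I -> set T) :
  countable D -> (forall i, D i -> nowhere_dense (F i)) ->
  meager (\bigcup_(i in D) F i).
Proof.
move=> /countable_injP[g ginj] ndF.
exists (fun n => \bigcup_(i in [set i | D i /\ g i = n]) F i); split.
  move=> n; have [[i [Di gi]]|none] := pselect (exists i, D i /\ g i = n).
    apply: (nowhere_denseS _ (ndF i Di)) => x [j [Dj gj] Fjx].
    by have <- : j = i by apply: ginj; rewrite ?inE // gi gj.
  rewrite bigcup0; first exact: nowhere_dense0.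
  by move=> j [Dj gj]; case: none; exists j.
by move=> x [i Di Fix]; exists (g i) => //; exists i.
Qed.

End NowhereDense.

Lemma exists_natSinv_lt (R : archiRealFieldType) (e : R) :
  0 < e -> exists k : nat, k.+1%:R^-1 < e.
Proof.
move=> e0; have [N _ /(_ N (leqnn N)) hN] := near_infty_natSinv_lt (PosNum e0).
by exists N.
Qed.

Section CompatibleMetric.
Variables (T : topologicalType) (d : T -> T -> Rdefinitions.R).
Hypothesis dT : compatible_metric d.

Lemma compatible_metric_open_ball x e : open [set y | d x y < e].
Proof.
case: dT => _ _ _ dtri -> y /= dxy.
exists (e - d x y) => [|z /= dyz]; first by rewrite subr_gt0.
by have := dtri x y z; lra.
Qed.

Lemma compatible_metric_nbhs x U :
  nbhs x U -> exists2 e, 0 < e & [set y | d x y < e] `<=` U.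
Proof.
rewrite nbhsE => -[V [oV Vx] VU]; case: dT => _ _ _ _ /(_ V) [/(_ oV) + _].
by move=> /(_ x Vx) [e e0 eV]; exists e => // y /eV /VU.
Qed.

Lemma separable_metric_second_countable :
  separable_space T -> @second_countable T.
Proof.
case=> D [cD dD]; case: dT => _ d00 dsym dtri _.
pose ball (qk : T * nat) := [set y | d qk.1 y < qk.2.+1%:R^-1].
exists (ball @` (D `*` [set: nat])).
  exact: sub_countable (card_image_le _ _) (countableX cD (countableP _)).
split; first by move=> _ [qk _ <-]; exact: compatible_metric_open_ball.
move=> x U /compatible_metric_nbhs[e e0 eU].
have [k hk] : exists k : nat, k.+1%:R^-1 < e / 2.
  by apply: exists_natSinv_lt; rewrite divr_gt0.
have [q [dxq Dq]] : exists q, d x q < k.+1%:R^-1 /\ D q.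
  apply: dD; last exact: compatible_metric_open_ball.
  by exists x; rewrite /= (d00 x x).2.
exists (ball (q, k)); first by split; [exists (q, k) | rewrite /ball /= dsym].
move=> y; rewrite /ball /= => dqy; apply: eU => /=; have := dtri x q y.
set r := k.+1%:R^-1 in hk dxq dqy *; lra.
Qed.

End CompatibleMetric.

Lemma basis_nbhs (T : topologicalType) (B : set (set T)) x U :
  basis B -> nbhs x U -> exists2 V, B V /\ V x & V `<=` U.
Proof. by case=> _ Bx /(Bx x). Qed.

Lemma not_locally_dense_frontier (X Y : topologicalType) (f : X -> Y)
    (B : set (set X)) x :
  basis B -> ~ locally_dense f x ->
  exists2 V, B V & (closure (f @` V) `\` (closure (f @` V))°) (f x).
Proof.
move=> bB; rewrite /locally_dense => /existsNP[U /not_implyP[nU nfU]].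
have [V [BV Vx] VU] := basis_nbhs bB nU.
exists V => //; split; first by apply: subset_closure; exists x.
by move=> /(interiorS (closureS (image_subset f VU))).
Qed.

Lemma meager_image_not_locally_dense (X Y : topologicalType) (f : X -> Y) :
  @second_countable X -> meager (f @` [set x | ~ locally_dense f x]).
Proof.
case=> B cB bB.
have ndB V : B V -> nowhere_dense (closure (f @` V) `\` (closure (f @` V))°).
  by move=> _; exact/nowhere_dense_setD_interior/closed_closure.
apply: meagerS (meager_bigcup cB ndB) => _ [x nld <-].
by have [V BV fxV] := not_locally_dense_frontier bB nld; exists V.
Qed.

Theorem mainTheorem6 (X Y : topologicalType) (f : X -> Y) :
  polish X -> polish Y -> continuous f ->
  meager (f @` [set x | ~ locally_dense f x]).
Proof.
move=> [sepX [d [dX _]]] _ _; apply: meager_image_not_locally_dense.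
exact: separable_metric_second_countable dX sepX.
Qed.
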